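(* Let $\mathcal{M}=(E,\rho)$ be a $q$-matroid, $l=\dim\mathrm{cl}(0)$ and $f=\dim E-l$. Then $\mathcal{Z}(\mathcal{M})=\{\mathrm{cl}(0)\}$ if and only if $\mathcal{M}\approx\mathcal{U}_{0,l}\oplus\mathcal{U}_{f,f}$. In particular, $\mathcal{M}$ has exactly one cyclic flat if and only if it is (equivalent to) the direct sum of a trivial and a free $q$-matroid.
   Context: Let $\mathbb{F}=\mathbb{F}_q$. A $q$-matroid is $\mathcal{M}=(E,\rho)$, $E$ a finite-dimensional $\mathbb{F}$-vector space, $\rho$ from subspaces to $\mathbb{Z}_{\ge0}$ with $0\le\rho(V)\le\dim V$, monotone and submodular. Flat: $\rho(F+\langle x\rangle)>\rho(F)$ for all $x\notin F$. Closure: $\mathrm{cl}(V)=\sum\{\langle x\rangle:\rho(V+\langle x\rangle)=\rho(V)\}$. Cyclic core: $\mathrm{cyc}(V)=\{x\in V\mid\rho(W)=\rho(V)\text{ for all }W\le V\text{ with }W+\langle x\rangle=V\}$; cyclic: $\mathrm{cyc}(V)=V$; $\mathcal{Z}(\mathcal{M})$: the set of cyclic flats. $\mathcal{U}_{0,n}$ (trivial) and $\mathcal{U}_{n,n}$ (free) are the $q$-matroids on an $n$-dimensional space with $\rho\equiv0$, resp. $\rho(V)=\dim V$. Equivalence $\approx$: an $\mathbb{F}$-isomorphism of ground spaces preserving rank. Direct sum: for $E=E_1\oplus E_2$ with projections $\pi_i$, $\mathcal{M}_1\oplus\mathcal{M}_2=(E,\rho)$ where $\rho(V)=\dim V+\min_{X\le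 V}(\rho_1(\pi_1(X))+\rho_2(\pi_2(X))-\dim X)$. *)

From HB Require Import structures.
From mathcomp Require Import all_boot all_order all_algebra all_field.
Set Implicit Arguments. Unset Strict Implicit. Unset Printing Implicit Defensive.
Import GRing.Theory.
Local Open Scope ring_scope.

Section QMatroid.
Variables (F : finFieldType) (E : vectType F).
Implicit Types (V W : {vspace E}) (r : {vspace E} -> nat).

Definition qmatroid r : Prop :=
  [/\ forall V, (r V <= \dim V)%N,
      forall V W, (V <= W)%VS -> (r V <= r W)%N
    & forall V W, (r (V + W)%VS + r (V :&: W)%VS <= r V + r W)%N].

Definition qflat r V : Prop :=
  forall x : E, x \notin V -> (r V < r (V + <[x]>)%VS)%N.

Definition qcl r V : {vspace E} :=
  (\sum_(x : finvect_type E | r (V + <[x : E]>)%VS == r V) <[x : E]>)%VS.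

(* x lies in the cyclic core of V *)
Definition in_qcyc r V (x : E) : Prop :=
  x \in V /\ (forall W, (W <= V)%VS -> (W + <[x]>)%VS = V -> r W = r V).

Definition qcyclic r V : Prop := forall x : E, x \in V -> in_qcyc r V x.

Definition qcyclic_flat r V : Prop := qflat r V /\ qcyclic r V.
End QMatroid.

Definition qequiv (F : finFieldType) (E1 E2 : vectType F)
  (r1 : {vspace E1} -> nat) (r2 : {vspace E2} -> nat) : Prop :=
  exists phi : 'Hom(E1, E2),
    [/\ lker phi = 0%VS, limg phi = fullv
      & forall V : {vspace E1}, r2 (phi @: V)%VS = r1 V].

Definition qU0 (F : finFieldType) (n : nat) : {vspace 'rV[F]_n} -> nat :=
  fun _ => 0%N.
Definition qUfree (F : finFieldType) (n : nat) : {vspace 'rV[F]_n} -> nat :=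
  fun V => \dim V.

(* direct sum on E1 x E2: rho(V) = dim V + min_{X <= V} (r1(pi1 X) + r2(pi2 X) - dim X),
   written equivalently in nat as min_{X <= V} (r1(pi1 X) + r2(pi2 X) + (dim V - dim X)).
   Every subspace X of E1 x E2 is the span of some (dim (E1 x E2))-tuple, so the
   minimum over subspaces is taken over such tuples; the initial value is the
   value at X = 0. *)
Section DirectSum.
Variables (F : finFieldType) (E1 E2 : vectType F).
Variables (r1 : {vspace E1} -> nat) (r2 : {vspace E2} -> nat).

Definition qpi1 : 'Hom((E1 * E2)%type, E1) := linfun (fun x : E1 * E2 => x.1).
Definition qpi2 : 'Hom((E1 * E2)%type, E2) := linfun (fun x : E1 * E2 => x.2).

Definition qdsum_term (V X : {vspace (E1 * E2)%type}) : nat :=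
  (r1 (qpi1 @: X)%VS + r2 (qpi2 @: X)%VS + (\dim V - \dim X))%N.

Definition qdsum (V : {vspace (E1 * E2)%type}) : nat :=
  \big[minn/qdsum_term V 0%VS]_(s : (\dim {:(E1 * E2)%type}).-tuple
                                   (finvect_type (E1 * E2)%type)
                              | (<<s>> <= V)%VS) qdsum_term V <<s>>%VS.
End DirectSum.

From HB Require Import structures.
From mathcomp Require Import all_boot all_order all_algebra all_field.
From mathcomp Require Import zify.
From Stdlib Require Import Classical.
Set Implicit Arguments. Unset Strict Implicit. Unset Printing Implicit Defensive.
Import Order.TTheory GRing.Theory.
Local Open Scope ring_scope.

(* If [cl(0)] is the only cyclic flat, then [r (cl(0)) = 0], and a subspace [Z]
   of minimal dimension whose nullity [dim Z - r Z] equals that of [E] is a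
   cyclic flat, hence [Z = cl(0)] and [r E = dim E - dim cl(0)]; submodularity
   then forces [r V = dim (V + cl(0)) - dim cl(0)] for every [V].  This is the
   rank of [U_{0,l} + U_{f,f}] transported along any isomorphism
   [E ~ F^l x F^f] that sends [cl(0)] onto [F^l x 0].  Conversely, for the rank
   [V |-> dim (V + K) - dim K] the closure of [0] is [K] and [K] is the only
   cyclic flat. *)

Section SubspaceDim.
Variables (F : fieldType) (vT : vectType F).
Implicit Types (U V W X : {vspace vT}) (x : vT).

Lemma dim_addv_line_le U x : (\dim (U + <[x]>) <= (\dim U).+1)%N.
Proof.
apply: leq_trans (leq_of_leqif (dimv_add_leqif U <[x]>)) _.
by rewrite -addn1 leq_add2l dim_vline leq_b1.
Qed.

Lemma dim_addv_line U x : x \notin U -> \dim (U + <[x]>) = (\dim U).+1.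
Proof.
move=> xU; apply/eqP; rewrite eqn_leq dim_addv_line_le /=.
by rewrite (ltn_leqif (dimv_leqif_sup (addvSl U <[x]>))) subv_add subvv.
Qed.

Lemma exists_span_tuple U : exists s : (\dim {:vT}).-tuple vT, <<s>>%VS = U.
Proof.
exists [tuple (vbasis U)`_i | i < \dim {:vT}].
apply/eqP; rewrite eqEsubv; apply/andP; split.
  apply/span_subvP => _ /mapP[i _ ->].
  have [ltiU | leUi] := ltnP i (\dim U).
    by apply: vbasis_mem; rewrite mem_nth ?size_tuple.
  by rewrite nth_default ?size_tuple ?mem0v.
rewrite -[X in (X <= _)%VS](span_basis (vbasisP U)).
apply: sub_span => _ /(nthP 0)[i ltiU <-]; apply/mapP.
have ltin : (i < \dim {:vT})%N.
  by rewrite size_tuple in ltiU; exact: leq_trans ltiU (dimvS (subvf U)).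
by exists (Ordinal ltin); rewrite // mem_enum.
Qed.

Lemma coord_basis_eq0 n (X : n.-tuple vT) U v :
  basis_of U X -> v \in U -> (forall i, coord X i v = 0) -> v = 0.
Proof.
move=> basisX vU coord0; rewrite (coord_basis basisX vU).
by apply: big1 => i _; rewrite coord0 scale0r.
Qed.

Lemma dim_limg_sup (rT : vectType F) (f : 'Hom(vT, rT)) X W :
  (X <= W)%VS -> (\dim (f @: W) <= \dim (f @: X) + (\dim W - \dim X))%N.
Proof.
move=> XW; have := dimvS (capvS XW (subvv (lker f))).
have := limg_ker_dim f X; have := limg_ker_dim f W; lia.
Qed.

Lemma ex_min_dim (P : {vspace vT} -> Prop) V :
  P V -> exists2 Z, P Z & forall W, (\dim W < \dim Z)%N -> ~ P W.
Proof.
move: {2}(\dim V) (leqnn (\dim V)) => n; elim: n V => [|n IHn] V leVn PV.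
  by exists V => // W; rewrite ltnNge (leq_trans leVn).
have [[W ltWV PW] | noW] := classic (exists2 W, (\dim W < \dim V)%N & P W).
  exact: IHn W (leq_trans ltWV leVn) PW.
by exists V => // W ltWV PW; apply: noW; exists W.
Qed.

End SubspaceDim.

Lemma dim_pair (F : fieldType) (E1 E2 : vectType F) :
  \dim {:(E1 * E2)%type} = (\dim {:E1} + \dim {:E2})%N.
Proof. by rewrite !dimvf. Qed.

Lemma dim_rV (F : fieldType) n : \dim {:'rV[F]_n} = n.
Proof. by rewrite dimvf; exact: mul1n. Qed.

Section RankModulo.
Variables (F : fieldType) (vT : vectType F).
Implicit Types (U V : {vspace vT}).

Definition rank_mod U V : nat := (\dim (V + U) - \dim U)%N.

Lemma rank_mod0 U : rank_mod U 0 = 0%N.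
Proof. by rewrite /rank_mod add0v subnn. Qed.

Lemma rank_mod_cap U V : rank_mod U V = (\dim V - \dim (V :&: U))%N.
Proof. by have := dimv_sum_cap V U; rewrite /rank_mod; lia. Qed.

Lemma rank_mod_eq0 U V : (rank_mod U V == 0%N) = (V <= U)%VS.
Proof.
rewrite subn_eq0 (geq_leqif (dimv_leqif_sup (addvSr V U))).
by rewrite subv_add subvv andbT.
Qed.

End RankModulo.

Section RankModuloLinear.
Variables (F : fieldType) (vT rT : vectType F) (f : 'Hom(vT, rT)).
Implicit Types (U V : {vspace vT}).

Lemma rank_mod_lker V : rank_mod (lker f) V = \dim (f @: V).
Proof. by rewrite rank_mod_cap -(limg_ker_dim f V) addKn. Qed.

Lemma rank_mod_limg U V :
  lker f = 0%VS -> rank_mod (f @: U) (f @: V) = rank_mod U V.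
Proof.
by move=> f_inj; rewrite /rank_mod -limgD !limg_dim_eq // f_inj capv0.
Qed.

End RankModuloLinear.

Section RankModuloQMatroid.
Variables (F : finFieldType) (E : vectType F).
Variables (C : {vspace E}) (r : {vspace E} -> nat).
Hypothesis rE : r =1 rank_mod C.

Lemma qcl0_rank_mod : qcl r 0%VS = C.
Proof.
have loop x : (r (0 + <[x]>)%VS == r 0%VS) = (x \in C).
  by rewrite !rE add0v rank_mod0 rank_mod_eq0.
apply/eqP; rewrite eqEsubv; apply/andP; split.
  by apply/subv_sumP => x; rewrite loop.
apply/subvP => x xC; rewrite memvE.
by apply: (sumv_sup (x : finvect_type E)); rewrite ?loop.
Qed.

Lemma qflat_rank_mod_sup V : qflat r V -> (C <= V)%VS.
Proof.
move=> flatV; apply/subvP => x xC; apply/negPn/negP => xV.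
by have := flatV x xV; rewrite !rE /rank_mod -addvA (addv_idPr xC) ltnn.
Qed.

Lemma qcyclic_rank_mod_sub V : (C <= V)%VS -> qcyclic r V -> (V <= C)%VS.
Proof.
move=> CV cycV; apply/subvP => x xV; apply/negPn/negP => xC.
(* [C + D] is a hyperplane of [V] containing [C] but not [x]. *)
pose D := (V :\: (C + <[x]>))%VS.
have CxV : (C + <[x]> <= V)%VS by rewrite subv_add CV -memvE.
have CDV : (C + D <= V)%VS by rewrite subv_add CV diffvSl.
have CDxV : (C + D + <[x]> = V)%VS.
  by rewrite [(C + D)%VS]addvC -addvA addv_diff (addv_idPl CxV).
have CD0 : (C :&: D = 0)%VS.
  apply/eqP; rewrite -subv0 -(capv_diff V (C + <[x]>)) capvC.
  by rewrite capvS ?addvSl.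
have := (cycV x xV).2 _ CDV CDxV.
rewrite !rE /rank_mod (addv_idPl CV) (addv_idPl (addvSl C D)).
rewrite dimv_disjoint_sum //; have := dimv_cap_compl V (C + <[x]>).
by rewrite (capv_idPr CxV) dim_addv_line // -/D; lia.
Qed.

Lemma qcyclic_flat_rank_mod V : qcyclic_flat r V <-> V = C.
Proof.
have rC0 : r C = 0%N by apply/eqP; rewrite rE rank_mod_eq0.
split=> [[flatV cycV] | ->].
  have CV := qflat_rank_mod_sup flatV.
  by apply/eqP; rewrite eqEsubv CV qcyclic_rank_mod_sub.
split=> [x xC | x xC].
  by rewrite rC0 rE lt0n rank_mod_eq0 subv_add subvv.
by split=> // W WC _; rewrite rC0; apply/eqP; rewrite rE rank_mod_eq0.
Qed.

End RankModuloQMatroid.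

Section QMatroidRank.
Variables (F : finFieldType) (E : vectType F) (r : {vspace E} -> nat).
Hypothesis Hr : qmatroid r.
Implicit Types (C V W Z : {vspace E}).

Lemma qrank_le_dim V : (r V <= \dim V)%N. Proof. by case: Hr. Qed.

Lemma qrankS V W : (V <= W)%VS -> (r V <= r W)%N.
Proof. by case: Hr => _ + _; apply. Qed.

Lemma qrank_submod V W : (r (V + W)%VS + r (V :&: W)%VS <= r V + r W)%N.
Proof. by case: Hr. Qed.

Lemma qrank0 : r 0%VS = 0%N.
Proof. by have := qrank_le_dim 0%VS; rewrite dimv0 leqn0 => /eqP. Qed.

Lemma qrank_sup V W : (V <= W)%VS -> (r W <= r V + (\dim W - \dim V))%N.
Proof.
move=> VW; have := qrank_submod V (W :\: V).
rewrite addvC addv_diff (addv_idPl VW); have := qrank_le_dim (W :\: V).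
by have := dimv_cap_compl W V; rewrite (capv_idPr VW); lia.
Qed.

Lemma qrank_qcl0 : r (qcl r 0%VS) = 0%N.
Proof.
apply: (big_ind (fun U => r U = 0%N)) => [|U W rU rW|x /eqP].
- exact: qrank0.
- by have := qrank_submod U W; rewrite rU rW; lia.
- by rewrite add0v qrank0.
Qed.

Lemma qrank_le_rank_mod C V : r C = 0%N -> (r V <= rank_mod C V)%N.
Proof.
move=> rC0; apply: leq_trans (qrankS (addvSl V C)) _.
by have := qrank_sup (addvSr V C); rewrite rC0.
Qed.

Definition qnullity V : nat := (\dim V - r V)%N.

Lemma qnullityS V W : (V <= W)%VS -> (qnullity V <= qnullity W)%N.
Proof.
move=> VW; have := qrank_sup VW; have := dimvS VW; have := qrank_le_dim V.
rewrite /qnullity; lia.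
Qed.

Lemma qflat_max_nullity Z : qnullity Z = qnullity fullv -> qflat r Z.
Proof.
move=> nullZ x xZ; rewrite ltnNge; apply/negP => rZx.
have := qnullityS (subvf (Z + <[x]>)).
by rewrite -nullZ /qnullity dim_addv_line //; have := qrank_le_dim Z; lia.
Qed.

Lemma qcyclic_min_nullity Z :
  (forall W, (\dim W < \dim Z)%N -> qnullity W <> qnullity Z) -> qcyclic r Z.
Proof.
move=> minZ x xZ; split=> // W WZ WxZ.
have [-> // | neWZ] := eqVneq W Z.
have ltWZ : (\dim W < \dim Z)%N by rewrite (ltn_leqif (dimv_leqif_eq WZ)) neWZ.
have := minZ W ltWZ; have := qnullityS WZ; have := qrankS WZ.
have := dim_addv_line_le W x; rewrite WxZ.
by have := qrank_le_dim W; have := qrank_le_dim Z; rewrite /qnullity; lia.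
Qed.

Section UniqueCyclicFlat.
Hypothesis unique_cyclic_flat : forall V, qcyclic_flat r V <-> V = qcl r 0%VS.

Lemma qrank_fullv : r fullv = (\dim {:E} - \dim (qcl r 0%VS))%N.
Proof.
pose maximal_nullity Z := qnullity Z = qnullity fullv.
have [Z nullZ minZ] := @ex_min_dim _ _ maximal_nullity fullv erefl.
have cycZ : qcyclic r Z by apply: qcyclic_min_nullity => W /minZ; rewrite nullZ.
have /unique_cyclic_flat ZE : qcyclic_flat r Z
  by split=> //; apply: qflat_max_nullity.
move: nullZ; rewrite /maximal_nullity ZE /qnullity qrank_qcl0 subn0.
by have := qrank_le_dim fullv; lia.
Qed.

Lemma qrank_rank_mod_qcl0 V : r V = rank_mod (qcl r 0%VS) V.
Proof.
set C := qcl r 0%VS; apply/eqP.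
rewrite eqn_leq qrank_le_rank_mod ?qrank_qcl0 //=.
have := qrank_sup (subvf (V + C)); have := qrank_submod V C.
rewrite qrank_fullv qrank_qcl0 -/C /rank_mod.
by have := dimvS (subvf (V + C)); have := dimvS (addvSr V C); lia.
Qed.

End UniqueCyclicFlat.
End QMatroidRank.

Section DirectSumRank.
Variables (F : finFieldType) (E1 E2 : vectType F).
Variables (r1 : {vspace E1} -> nat) (r2 : {vspace E2} -> nat).
Implicit Types (V X : {vspace (E1 * E2)%type}).

Lemma dim_lker_qpi2 :
  \dim (lker (qpi2 E1 E2)) = \dim {:E1}.
Proof.
have onto : limg (qpi2 E1 E2) = fullv.
  apply/eqP; rewrite eqEsubv subvf; apply/subvP => y _.
  by rewrite (_ : y = qpi2 E1 E2 (0, y)) ?memv_img ?memvf // lfunE.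
by have := limg_ker_dim (qpi2 E1 E2) fullv; rewrite capfv onto dim_pair; lia.
Qed.

Lemma qdsum_le V X :
  (X <= V)%VS -> (qdsum r1 r2 V <= qdsum_term r1 r2 V X)%N.
Proof.
have [s <-] := exists_span_tuple X => sV.
by rewrite /qdsum -minEnat; exact: (bigmin_le_cond (T := nat) _ _ sV).
Qed.

Lemma qdsum_ge V m :
    (forall X, (X <= V)%VS -> m <= qdsum_term r1 r2 V X)%N ->
  (m <= qdsum r1 r2 V)%N.
Proof.
move=> le_m; rewrite /qdsum -minEnat.
by apply: (le_bigmin (T := nat)) => [|s]; apply: le_m; rewrite ?sub0v.
Qed.

Lemma qdsum_trivial_free V :
    (forall U1, r1 U1 = 0%N) -> (forall U2, r2 U2 = \dim U2) ->
  qdsum r1 r2 V = \dim (qpi2 E1 E2 @: V).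
Proof.
move=> r1E r2E; apply/eqP; rewrite eqn_leq; apply/andP; split.
  apply: leq_trans (qdsum_le (subvv V)) _.
  by rewrite /qdsum_term r1E r2E subnn addn0.
by apply: qdsum_ge => X XV; rewrite /qdsum_term r1E r2E add0n dim_limg_sup.
Qed.

End DirectSumRank.

Lemma exists_adapted_iso
    (F : finFieldType) (E : vectType F) (C : {vspace E}) f :
    (\dim C + f)%N = \dim {:E} ->
  exists phi : 'Hom(E, ('rV[F]_(\dim C) * 'rV[F]_f)%type),
    [/\ lker phi = 0%VS, limg phi = fullv & (phi @: C)%VS = lker (qpi2 _ _)].
Proof.
move=> dimCf; have [Y basisY] : exists Y : f.-tuple E, basis_of C^C Y.
  have -> : f = \dim C^C by rewrite dimv_compl -dimCf addKn.
  by exists (vbasis C^C); exact: vbasisP.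
pose g v : ('rV[F]_(\dim C) * 'rV[F]_f)%type :=
  (\row_i coord (vbasis C) i (projv C v), \row_j coord Y j (v - projv C v)).
have g_lin : linear g.
  move=> a u v; congr (_, _); apply/rowP => i.
    by rewrite !mxE [projv C _]linearP /= linearP.
  by rewrite !mxE [projv C _]linearP /= opprD addrACA -scalerBr linearP.
pose gL : {linear E -> _} := HB.pack g (GRing.isLinear.Build _ _ _ _ g g_lin).
pose phi := linfun gL.
have phiE v : phi v = g v by rewrite lfunE.
have phi_inj : lker phi = 0%VS.
  apply/eqP; rewrite -subv0; apply/subvP => v; rewrite memv_ker phiE memv0.
  case/eqP => /rowP gv1 /rowP gv2.
  have pv0 : projv C v = 0.
    apply: (coord_basis_eq0 (vbasisP C) (memv_proj C v)) => i.
    by have := gv1 i; rewrite !mxE.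
  have : v - projv C v = 0.
    apply: (coord_basis_eq0 basisY (memv_projC C v)) => j.
    by have := gv2 j; rewrite !mxE.
  by rewrite pv0 subr0 => ->.
have dim_phi U : \dim (phi @: U) = \dim U.
  by rewrite limg_dim_eq // phi_inj capv0.
have phiC_sub : (phi @: C <= lker (qpi2 _ _))%VS.
  apply/subvP => _ /memv_imgP[v vC ->]; rewrite memv_ker lfunE phiE /=.
  by rewrite projv_id // subrr; apply/eqP/rowP => j; rewrite !mxE linear0.
exists phi; split=> //.
  apply/eqP; rewrite eqEdim subvf dim_phi dim_pair !(dim_rV F).
  by rewrite dimCf leqnn.
apply/eqP; rewrite eqEdim phiC_sub dim_phi dim_lker_qpi2.
by rewrite (dim_rV F) leqnn.
Qed.

Theorem corollary7p10 (F : finFieldType) (E : vectType F)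
  (r : {vspace E} -> nat) (Hr : qmatroid r) :
  let l := \dim (qcl r 0%VS) in
  let f := (\dim {:E} - l)%N in
  (forall V : {vspace E}, qcyclic_flat r V <-> V = qcl r 0%VS) <->
  qequiv r (qdsum (@qU0 F l) (@qUfree F f)).
Proof.
move=> l f.
have rank_sum W :
    qdsum (@qU0 F l) (@qUfree F f) W = rank_mod (lker (qpi2 _ _)) W.
  by rewrite rank_mod_lker qdsum_trivial_free.
split=> [unique_cf | [phi [phi_inj phi_onto phi_rank]]].
  have dimCf : (l + f)%N = \dim {:E} by rewrite subnKC ?dimvS ?subvf.
  have [phi [phi_inj phi_onto phiC]] := exists_adapted_iso dimCf.
  exists phi; split=> // V.
  rewrite rank_sum -phiC rank_mod_limg //.
  by rewrite -(qrank_rank_mod_qcl0 Hr unique_cf).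
pose K := (phi @^-1: lker (qpi2 'rV[F]_l 'rV[F]_f))%VS.
have phiK : (phi @: K)%VS = lker (qpi2 _ _) by rewrite lpreimK ?phi_onto ?subvf.
have rK V : r V = rank_mod K V.
  by rewrite -phi_rank rank_sum -phiK rank_mod_limg.
by move=> V; rewrite (qcl0_rank_mod rK); exact: qcyclic_flat_rank_mod.
Qed.
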